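(* Let $n\in\mathbb{N}$ and let $\sigma$ be a probability distribution on $[n]$ such that $\sigma_{\le i}>\tfrac in$ for every $i\in[n-1]$. Then the transition probabilities $P$ on $\mathbb{N}_0^{n-1}$ (defined in the context) admit the stationary distribution \[\pi=\bigotimes_{i=1}^{n-1}\mathrm{Geom}\Big(1-\frac{i}{n\,\sigma_{\le i}}\Big).\]
   Context: For a probability distribution $\sigma$ on $[n]$ write $\sigma_i=\Pr_{i^*\sim\sigma}[i^*=i]$ and $\sigma_{\le i}=\Pr_{i^*\sim\sigma}[i^*\le i]$. $\mathrm{Geom}(p)$ is the distribution of the number of failed independent Bernoulli($p$) trials before the first success (support $\mathbb{N}_0$), and $\bigotimes$ is the product of independent distributions. States are vectors $\vec d=(d_1,\dots,d_{n-1})\in\mathbb{N}_0^{n-1}$ (interpretation: $d_i$ is the number of elements strictly between the $i$-th and $(i+1)$-th smallest top-element of a MultiQueue with $n$ queues). Let $\vec e_i$ be the $i$-th unit vector for $i\in[n-1]$, and set the conventions $d_n=\infty$ and $\vec e_n=\vec 0$. The transition from a state $\vec d_{\mathrm{start}}$ to a state $\vec d_{\mathrm{end}}$ proceeds through transitional states $(\vec d,i)\in\mathbb{N}_0^{n-1}\times[n]$: (1) sample $i^*\sim\sigma$ and go to the transitional state $(\vec d_{\mathrm{start}},i^* )$. (2) While in a transitional state $(\vec d,i)$: if $d_i>0$, then with probability $(i-1)/i$ move to the transitional state $(\vec d-\vec e_i+\vec e_{i-1},i)$, and with probability $1/i$ end the transition in the state $\vec d_{\mathrm{end}}=\vec d-\vec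 e_i$; if $d_i=0$, move to the transitional state $(\vec d,i+1)$. $P(\vec d_{\mathrm{start}},\vec d_{\mathrm{end}})$ is the resulting probability of ending in $\vec d_{\mathrm{end}}$. A distribution $\pi$ is stationary if $\vec d_{\mathrm{start}}\sim\pi$ implies $\vec d_{\mathrm{end}}\sim\pi$. *)

From HB Require Import structures.
From mathcomp Require Import all_boot all_order all_algebra.
From mathcomp Require Import all_classical all_reals all_analysis.
Set Implicit Arguments. Unset Strict Implicit. Unset Printing Implicit Defensive.
Import Order.TTheory GRing.Theory Num.Theory.
Local Open Scope ring_scope.

(* States d = (d_1, ..., d_{n-1}) in N_0^{n-1}; d_i (1-based) is  d (i-1). *)
Definition state (n : nat) := {ffun 'I_n.-1 -> nat}.

(* d_i for 1-based i (only meaningful for 1 <= i <= n-1; d_n = oo is handled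
   separately in the transition). *)
Definition dval n (d : state n) (i : nat) : nat :=
  match i with
  | 0 => 0
  | j.+1 => if insub j is Some o then d o else 0
  end.

(* d + e_i  and  d - e_i  for 1-based i; with e_n = 0 (and the out-of-range
   e_0, which only ever appears with probability 0, also acting trivially). *)
Definition addE n (d : state n) (i : nat) : state n :=
  [ffun j : 'I_n.-1 => if (j.+1 == i)%N then (d j).+1 else d j].
Definition subE n (d : state n) (i : nat) : state n :=
  [ffun j : 'I_n.-1 => if (j.+1 == i)%N then (d j).-1 else d j].

(* absorb k d i e = probability that the transition process started in the
   transitional state (d,i) ends in the state e within at most k steps. *)
Fixpoint absorb (R : realType) (n k : nat) (d : state n) (i : nat) (e : state n)
  {struct k} : R :=
  match k with
  | 0 => 0
  | k'.+1 =>
    if (n <= i)%N || (0 < dval d i)%N then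
      (i.-1%:R / i%:R) * absorb R k' (addE (subE d i) i.-1) i e
      + (1 / i%:R) * (subE d i == e)%:R
    else absorb R k' d i.+1 e
  end.

(* P(d_start, d_end): probability of ending in d_end, i.e. the limit of the
   probability of having ended in d_end within k steps (first step: i* ~ sigma). *)
Definition trans_prob (R : realType) n (sigma : 'I_n -> R) (ds de : state n) : R :=
  limn (fun k : nat => \sum_(j < n) sigma j * absorb R k ds j.+1 de).

Definition sigma_le (R : realType) n (sigma : 'I_n -> R) (i : nat) : R :=
  \sum_(j < n | (j < i)%N) sigma j.

Definition geom_pmf (R : realType) (p : R) (k : nat) : R := (1 - p) ^+ k * p.

Definition pi_dist (R : realType) n (sigma : 'I_n -> R) (d : state n) : R :=
  \prod_(j < n.-1)
     geom_pmf (1 - (j.+1)%:R / (n%:R * sigma_le sigma j.+1)) (d j).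

Definition is_distribution (R : realType) n (p : state n -> R) : Prop :=
  (forall d, 0 <= p d) /\ (\esum_(d in [set: state n]) (p d)%:E = 1%E).

Definition is_stationary (R : realType) n (sigma : 'I_n -> R)
  (p : state n -> R) : Prop :=
  is_distribution p /\
  forall de : state n,
    \esum_(ds in [set: state n]) (p ds * trans_prob sigma ds de)%:E = (p de)%:E.

(* Fix the target state e, let F_i(d) be the probability that the transition
   started in the transitional state (d, i) ends in e, and write
   E[f; A] = sum_{d in A} pi(d) f(d).  With q_i = i / (n sigma_{<=i}), pi is the
   product of the Geom(1 - q_i), so adding a unit to d_i multiplies pi by q_i and
   the move d -> d - e_i + e_{i-1} rescales pi by q_{i-1} / q_i.  Averaging the
   one-step recursion of F_i over the states with d_i > 0 (all states if i = n,
   as d_n = oo) therefore gives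
     sigma_{<=i} E[F_i; d_i > 0] = sigma_{<=i-1} E[F_i; d_{i-1} > 0] + pi(e) / n,
   and with u_i = sigma_{<=i} E[F_{i+1}; d_i = 0] (so u_0 = u_n = 0) this becomes
   sigma_i E[F_i] = u_i - u_{i-1} + pi(e) / n.  Summing over i telescopes to
   sum_i sigma_i E[F_i] = pi(e), which is stationarity. *)

From HB Require Import structures.
From mathcomp Require Import all_boot all_order all_algebra.
From mathcomp Require Import all_classical all_reals all_analysis.
From mathcomp Require Import zify ring.

Set Implicit Arguments. Unset Strict Implicit. Unset Printing Implicit Defensive.
Import Order.TTheory GRing.Theory Num.Theory numFieldNormedType.Exports.
Local Open Scope classical_set_scope.
Local Open Scope ring_scope.

Section Absorption.
Variables (R : realType) (n : nat).
Implicit Types (d e : state n).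

Lemma absorb_ge0 k d i e : 0 <= absorb R k d i e.
Proof.
elim: k d i => [|k IH] d i //=.
by case: ifP => _; rewrite ?addr_ge0 ?mulr_ge0 ?divr_ge0.
Qed.

Lemma absorb_le1 k d i e : absorb R k d i e <= 1.
Proof.
elim: k d i => [|k IH] d i //=; case: ifP => _ //.
have exit_le1 : i.-1%:R / i%:R + 1 / i%:R <= 1 :> R.
  case: i => [|i]; first by rewrite !(invr0, mulr0, add0r).
  by rewrite -mulrDl /= natr1 divff.
apply: le_trans exit_le1; apply: lerD; rewrite ler_piMr ?divr_ge0 //.
by case: (_ == _).
Qed.

Lemma absorb_leS k d i e : absorb R k d i e <= absorb R k.+1 d i e.
Proof.
elim: k d i => [|k IH] d i; first exact: absorb_ge0.
by rewrite /=; case: ifP => _; rewrite ?lerD ?ler_wpM2l ?divr_ge0.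
Qed.

Lemma absorb_cvg d i e : cvgn (fun k => absorb R k d i e).
Proof.
apply: nondecreasing_is_cvgn; first by apply/nondecreasing_seqP => k; exact: absorb_leS.
by exists 1 => _ [k _ <-]; exact: absorb_le1.
Qed.

Definition hit d i e : R := limn (fun k => absorb R k d i e).

Lemma hit_ge0 d i e : 0 <= hit d i e.
Proof. by apply: limr_ge; [exact: absorb_cvg | apply: nearW => k; exact: absorb_ge0]. Qed.

Lemma hit_le1 d i e : hit d i e <= 1.
Proof. by apply: limr_le; [exact: absorb_cvg | apply: nearW => k; exact: absorb_le1]. Qed.

Lemma hitE d i e : hit d i e =
  if (n <= i)%N || (0 < dval d i)%N then
    i.-1%:R / i%:R * hit (addE (subE d i) i.-1) i e + 1 / i%:R * (subE d i == e)%:R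
  else hit d i.+1 e.
Proof.
have shiftS : limn (fun k => absorb R k d i e) = limn (fun k => absorb R k.+1 d i e).
  by apply/esym/cvg_lim => //; rewrite (cvg_shiftS (fun k => absorb R k d i e)); exact: absorb_cvg.
rewrite /hit shiftS /=.
case: ifP => _; apply: cvg_lim => //; last exact: absorb_cvg.
by apply: cvgD; [apply: cvgMr; exact: absorb_cvg | exact: cvg_cst].
Qed.

Lemma trans_probE (sigma : 'I_n -> R) ds de :
  trans_prob sigma ds de = \sum_(j < n) sigma j * hit ds j.+1 de.
Proof.
apply: cvg_lim => //; apply: cvg_big => // [|j _]; first exact: add_continuous.
by apply: cvgMr; exact: absorb_cvg.
Qed.

End Absorption.

Section States.
Variable n : nat.
Implicit Types (d : state n) (i k : nat).

Lemma dvalS d (o : 'I_n.-1) : dval d o.+1 = d o.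
Proof. by rewrite /dval valK. Qed.

Lemma dval_out d k : ~~ (0 < k < n)%N -> dval d k = 0%N.
Proof. by case: k => [|k] //= out_k; rewrite insubF //; apply: contraNF out_k; lia. Qed.

Lemma dvalP k : {o : 'I_n.-1 | k = o.+1} + {~~ (0 < k < n)%N}.
Proof.
case: (boolP (0 < k < n)%N) => k_in; last by right.
have k1_lt : (k.-1 < n.-1)%N by lia.
by left; exists (Ordinal k1_lt) => /=; lia.
Qed.

Lemma state_ext d1 d2 : (forall k, dval d1 k = dval d2 k) -> d1 = d2.
Proof. by move=> eq_d; apply/ffunP => o; rewrite -!dvalS eq_d. Qed.

Lemma dval_subE d i k :
  dval (subE d i) k = if k == i then (dval d k).-1 else dval d k.
Proof.
case: (dvalP k) => [[j ->]|k_out]; last by rewrite !dval_out //; case: ifP.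
by rewrite !dvalS ffunE.
Qed.

Lemma dval_addE d i k :
  dval (addE d i) k = if (k == i) && (0 < k < n)%N then (dval d k).+1 else dval d k.
Proof.
case: (dvalP k) => [[j ->]|k_out]; last by rewrite !dval_out // (negbTE k_out) andbF.
by rewrite !dvalS ffunE (_ : 0 < j.+1 < n)%N ?andbT //; have := ltn_ord j; lia.
Qed.

Lemma subE_out d i : ~~ (0 < i < n)%N -> subE d i = d.
Proof.
move=> i_out; apply: state_ext => k; rewrite dval_subE.
by case: eqP => [->|//]; rewrite dval_out.
Qed.

Lemma addE_out d i : ~~ (0 < i < n)%N -> addE d i = d.
Proof.
move=> i_out; apply: state_ext => k; rewrite dval_addE.
by case: eqP => [->|//]; rewrite (negbTE i_out).
Qed.

Lemma addEK d i : subE (addE d i) i = d.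
Proof.
apply: state_ext => k; rewrite dval_subE dval_addE.
by case: eqP => //= ->; case: ifPn => // /dval_out ->.
Qed.

Lemma subEK d i : (0 < dval d i)%N -> addE (subE d i) i = d.
Proof.
move=> d_i; have i_in : (0 < i < n)%N by apply: contraTT d_i => /dval_out ->.
apply: state_ext => k; rewrite dval_addE dval_subE.
by case: eqP => [->|//]; rewrite i_in prednK.
Qed.

(* The states in which the transitional state (d, i) does not move on to
   (d, i+1); [n <= i] accounts for d_n = oo. *)
Definition active i : set (state n) := [set d | (n <= i)%N || (0 < dval d i)%N].

Definition shift i d : state n := addE (subE d i) i.-1.

Lemma active_subEK d i : (i <= n)%N -> active i d -> addE (subE d i) i = d.
Proof.
move=> i_le /orP[n_le|]; last exact: subEK.
by rewrite addE_out ?subE_out //; apply/negP; lia.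
Qed.

Lemma active_addE d i : (0 < i <= n)%N -> active i (addE d i).
Proof.
move=> i_in; rewrite /active /=; case: (leqP n i) => //= i_lt.
by rewrite dval_addE eqxx (_ : 0 < i < n)%N //; lia.
Qed.

Lemma active_subE_eq d e i : (i <= n)%N -> active i d ->
  (subE d i == e) = (d == addE e i).
Proof.
move=> i_le act_d; apply/eqP/eqP => [<-|->]; last exact: addEK.
by rewrite active_subEK.
Qed.

Lemma shift_bij i : (1 < i <= n)%N ->
  set_bij (active i) (active i.-1) (shift i).
Proof.
move=> i_in; have i1_in : (0 < i.-1 < n)%N by lia.
have act_pred d : active i.-1 d <-> (0 < dval d i.-1)%N.
  by rewrite /active /= leqNgt (_ : i.-1 < n)%N //; lia.
split.
- by move=> d _; apply/act_pred; rewrite dval_addE eqxx i1_in.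
- move=> d1 d2 /set_mem act1 /set_mem act2 /(congr1 (fun d => subE d i.-1)).
  rewrite !addEK => /(congr1 (fun d => addE d i)).
  by rewrite !active_subEK //; lia.
- move=> d' /act_pred d'_pos; exists (addE (subE d' i.-1) i).
    by apply: active_addE; lia.
  by rewrite /shift addEK subEK.
Qed.

End States.

Section Esum.
Variable R : realType.
Local Open Scope ereal_scope.

Lemma esumZl (T : choiceType) (A : set T) (c : R) (a : T -> \bar R) :
  (0 <= c)%R -> (forall x, A x -> 0 <= a x) ->
  \esum_(x in A) (c%:E * a x) = c%:E * \esum_(x in A) a x.
Proof.
move=> c0 a0; rewrite /esum -ereal_supZl //; last first.
  by apply/set0P; exists 0; exists set0; [exact: fsets_set0 | rewrite fsbig_set0].
have sumZ X : finite_set X /\ X `<=` A ->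
    \sum_(i \in X) (c%:E * a i) = c%:E * \sum_(i \in X) a i.
  move=> [finX XA]; rewrite !fsbig_finite // big_seq [in RHS]big_seq.
  by rewrite ge0_sume_distrr // => i; rewrite in_fset_set // inE => /XA /a0.
congr ereal_sup; apply/seteqP; split => y /=.
- by move=> [X XA <-]; exists (\sum_(i \in X) a i); [exists X | rewrite sumZ].
- by move=> [z [X XA <-] <-]; exists X => //; rewrite sumZ.
Qed.

Lemma esum_ffun_prod (T : choiceType) (m : nat) (w : 'I_m -> T -> R) :
  (forall i x, (0 <= w i x)%R) ->
  (forall i, \esum_(x in [set: T]) (w i x)%:E = 1) ->
  \esum_(f in [set: {ffun 'I_m -> T}]) (\prod_(i < m) w i (f i))%:E = 1.
Proof.
elim: m w => [|m IH] w w_ge0 w_sum1.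
  rewrite (_ : [set: {ffun 'I_0 -> T}] = [set ffun0 (card_ord 0)]).
    by rewrite esum_set1 big_ord0 // lee_fin.
  by apply/seteqP; split => f // _; apply/ffunP => -[].
pose cons (p : T * {ffun 'I_m -> T}) : {ffun 'I_m.+1 -> T} :=
  [ffun i => if unlift ord0 i is Some j then p.2 j else p.1].
have cons_bij : set_bij [set: T * {ffun 'I_m -> T}] [set: {ffun 'I_m.+1 -> T}] cons.
  split=> // [[x1 f1] [x2 f2] _ _ /ffunP eq_f|g _].
    have := eq_f ord0; rewrite !ffunE unlift_none /= => ->.
    by congr pair; apply/ffunP => j; have := eq_f (lift ord0 j); rewrite !ffunE liftK.
  exists (g ord0, [ffun j => g (lift ord0 j)]) => //.
  by apply/ffunP => i; rewrite ffunE; case: unliftP => [j ->|->]; rewrite ?ffunE.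
rewrite (reindex_esum _ _ _ _ cons_bij).
rewrite (_ : setT = [set: T] `*`` fun=> [set: {ffun 'I_m -> T}]); last by apply/seteqP; split.
rewrite -(esum_esum (a := fun x f => (\prod_(i < m.+1) w i (cons (x, f) i))%:E)); last first.
  by move=> *; rewrite lee_fin prodr_ge0.
rewrite -(w_sum1 ord0); apply: eq_esum => x _.
transitivity (\esum_(f in [set: {ffun 'I_m -> T}])
    ((w ord0 x)%:E * (\prod_(i < m) w (lift ord0 i) (f i))%:E)).
  apply: eq_esum => f _; rewrite big_ord_recl -EFinM !ffunE unlift_none /=.
  by congr (_ * _)%:E; apply: eq_bigr => i _; rewrite ffunE liftK.
rewrite esumZl // => [|f _]; last by rewrite lee_fin prodr_ge0.
by rewrite (IH (fun i => w (lift ord0 i))) ?mule1.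
Qed.

Lemma geom_pmf_ge0 (p : R) k : (0 <= p <= 1)%R -> (0 <= geom_pmf p k)%R.
Proof. by case/andP=> p_ge0 p_le1; rewrite mulr_ge0 // exprn_ge0 // subr_ge0. Qed.

Lemma esum_geom_pmf (p : R) : (0 < p <= 1)%R ->
  \esum_(k in [set: nat]) (geom_pmf p k)%:E = 1.
Proof.
move=> /andP[p_gt0 p_le1].
rewrite -nneseries_esumT; last by move=> k; rewrite lee_fin geom_pmf_ge0 // ltW.
have q_lt1 : (`|1 - p| < 1)%R by rewrite ger0_norm ?subr_ge0 // ltrBlDr ltrDl.
apply: cvg_lim => //.
have -> : (fun N => \sum_(0 <= k < N) (geom_pmf p k)%:E) =
    EFin \o series (geometric p (1 - p)).
  apply/funext => N /=; rewrite sumEFin /series /=; congr EFin.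
  by apply: eq_bigr => k _; rewrite mulrC.
have := cvg_geometric_series q_lt1 (a := p).
rewrite subKr divff ?lt0r_neq0 // => /cvg_comp; exact.
Qed.

End Esum.

Lemma sigma_le0 (R : realType) n (sigma : 'I_n -> R) : sigma_le sigma 0 = 0.
Proof. exact: big_pred0. Qed.

Lemma sigma_leS (R : realType) n (sigma : 'I_n -> R) (j : 'I_n) :
  sigma_le sigma j.+1 = sigma_le sigma j + sigma j.
Proof.
rewrite /sigma_le (bigD1 j) //= addrC; congr (_ + _).
by apply: eq_bigl => i; rewrite ltnS ltn_neqAle andbC.
Qed.

Section Stationarity.
Variables (R : realType) (n : nat) (sigma : 'I_n -> R).
Hypothesis sigma_ge0 : forall j, 0 <= sigma j.
Hypothesis sigma_sum1 : \sum_(j < n) sigma j = 1.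
Hypothesis sigma_le_gt : forall i, (0 < i < n)%N -> i%:R / n%:R < sigma_le sigma i.

Local Notation s := (sigma_le sigma).
Let q i : R := i%:R / (n%:R * s i).
Let pi := pi_dist sigma.

Lemma n_gt0 : (0 < n)%N.
Proof. by case: n sigma sigma_sum1 => // sg; rewrite big_ord0 => /eqP; rewrite eq_sym oner_eq0. Qed.

Lemma natrn_neq0 : n%:R != 0 :> R.
Proof. by rewrite pnatr_eq0 -lt0n n_gt0. Qed.

Lemma sigma_le_n : s n = 1.
Proof. by rewrite -sigma_sum1; apply: eq_bigl => j; rewrite ltn_ord. Qed.

Lemma sigma_le_gt0 i : (0 < i <= n)%N -> 0 < s i.
Proof.
case/andP=> i_gt0; rewrite leq_eqVlt => /predU1P[->|i_lt]; first by rewrite sigma_le_n.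
by apply: le_lt_trans (sigma_le_gt _); rewrite ?i_gt0 // divr_ge0.
Qed.

Lemma q_gt0 i : (0 < i <= n)%N -> 0 < q i.
Proof.
move=> i_in; rewrite divr_gt0 ?mulr_gt0 ?sigma_le_gt0 // ltr0n ?n_gt0 //; lia.
Qed.

Lemma q_lt1 i : (0 < i < n)%N -> q i < 1.
Proof.
move=> i_in; rewrite ltr_pdivrMr ?mulr_gt0 ?ltr0n ?n_gt0 ?sigma_le_gt0 //; last by lia.
by rewrite mul1r mulrC -ltr_pdivrMr ?ltr0n ?n_gt0 // sigma_le_gt.
Qed.

Lemma q_n : q n = 1.
Proof. by rewrite /q sigma_le_n mulr1 divff // natrn_neq0. Qed.

Lemma sigma_le_q i : (i <= n)%N -> s i * q i = i%:R / n%:R.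
Proof.
case: i => [_|i i_le]; first by rewrite /q !mul0r mulr0.
have s_neq0 : s i.+1 != 0 by rewrite lt0r_neq0 // sigma_le_gt0.
by rewrite /q; field; rewrite s_neq0 natrn_neq0.
Qed.

Lemma q_in01 (j : 'I_n.-1) : 0 < q j.+1 < 1.
Proof.
have j_in : (0 < j.+1 < n)%N by rewrite -ltn_predRL ltn_ord.
by rewrite q_gt0 ?q_lt1 //; lia.
Qed.

Lemma pi_ge0 d : 0 <= pi d.
Proof.
apply: prodr_ge0 => j _; have /andP[q_gt0 q_lt1] := q_in01 j.
by apply: geom_pmf_ge0; rewrite subr_ge0 gerBl !ltW.
Qed.

Lemma pi_sum : \esum_(d in [set: state n]) (pi d)%:E = 1%E.
Proof.
apply: (esum_ffun_prod (w := fun j => geom_pmf (1 - q j.+1))) => j *;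
  have /andP[q_gt0 q_lt1] := q_in01 j.
- by apply: geom_pmf_ge0; rewrite subr_ge0 gerBl !ltW.
- by apply: esum_geom_pmf; rewrite subr_gt0 gerBl q_lt1 ltW.
Qed.

Lemma pi_addE d i : (0 < i <= n)%N -> pi (addE d i) = pi d * q i.
Proof.
move=> i_in; case: (dvalP n i) => [[j ->]|i_out]; last first.
  by rewrite addE_out // (_ : i = n) ?q_n ?mulr1 //; move: i_out i_in; lia.
rewrite /pi /pi_dist (bigD1 j) //= [in RHS](bigD1 j) //= ffunE eqxx.
rewrite (eq_bigr (fun k : 'I_n.-1 => geom_pmf (1 - q k.+1) (d k))) => [|k k_neq_j].
  by rewrite /geom_pmf exprS subKr [RHS]mulrC !mulrA.
by rewrite /addE ffunE eqSS val_eqE (negbTE k_neq_j).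
Qed.

Lemma pi_shift d i : (1 < i <= n)%N -> active i d ->
  pi (shift i d) = q i.-1 / q i * pi d.
Proof.
move=> i_in act_d; have q_neq0 : q i != 0 by rewrite lt0r_neq0 // q_gt0 //; lia.
rewrite -[in RHS](active_subEK _ act_d) /shift ?pi_addE; try lia.
by field.
Qed.

(* E[f; A]; all integrands below take values in [0, 1], so the sum is finite
   and [fine] loses nothing. *)
Definition wsum (A : set (state n)) (f : state n -> R) : R :=
  fine (\esum_(d in A) (pi d * f d)%:E).

Lemma pi_mul_ge0 d x : 0 <= x -> (0 <= (pi d * x)%:E)%E.
Proof. by move=> x_ge0; rewrite lee_fin mulr_ge0 ?pi_ge0. Qed.

Lemma wsumE A f : (forall d, 0 <= f d <= 1) ->
  \esum_(d in A) (pi d * f d)%:E = (wsum A f)%:E.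
Proof.
move=> f01; have f_ge0 d : 0 <= f d by case/andP: (f01 d).
rewrite fineK // ge0_fin_numE ?esum_ge0 // => [|d _]; last exact: pi_mul_ge0.
apply: (@le_lt_trans _ _ 1%E); last by rewrite ltry.
rewrite -pi_sum esum_mkcond; apply: le_esum => d _.
case: ifP => _; last by rewrite lee_fin pi_ge0.
by rewrite lee_fin ler_piMr ?pi_ge0 //; case/andP: (f01 d).
Qed.

Lemma wsum_split B f : (forall d, 0 <= f d <= 1) ->
  wsum setT f = wsum (~` B) f + wsum B f.
Proof.
move=> f01; apply: EFin_inj; rewrite EFinD -!wsumE // (esumID B) => [|d _].
  by rewrite !setTI addeC.
by apply: pi_mul_ge0; case/andP: (f01 d).
Qed.

Lemma wsum_shift i f : (1 < i <= n)%N -> (forall d, 0 <= f d <= 1) ->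
  wsum (active i.-1) f = q i.-1 / q i * wsum (active i) (f \o shift i).
Proof.
move=> i_in f01; apply: EFin_inj; rewrite EFinM -!wsumE // => [|d]; last exact: f01.
rewrite (reindex_esum _ _ _ _ (shift_bij i_in)) -esumZl => [||d _]; last 2 first.
- by rewrite divr_ge0 // ltW // q_gt0 //; lia.
- by apply: pi_mul_ge0; case/andP: (f01 (shift i d)).
by apply: eq_esum => d act_d; rewrite pi_shift // -EFinM mulrA.
Qed.

Lemma eq_wsum A f g : (forall d, A d -> f d = g d) -> wsum A f = wsum A g.
Proof. by move=> eq_fg; congr fine; apply: eq_esum => d /eq_fg ->. Qed.

Lemma wsum_set0 f : wsum set0 f = 0.
Proof. by rewrite /wsum esum_set0. Qed.

Lemma wsum_pt A x : A x -> wsum A (fun d => (d == x)%:R) = pi x.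
Proof.
move=> Ax; rewrite /wsum (esumID [set x]) => [|d _]; last exact: pi_mul_ge0.
rewrite (setIidr (_ : [set x] `<=` A)) => [|_ -> //].
rewrite esum_set1 ?esum1 ?adde0 ?eqxx ?mulr1 ?lee_fin ?pi_ge0 // => d [_].
by move/eqP/negbTE->; rewrite mulr0.
Qed.

Lemma wsumDZ A a b f g : 0 <= a -> 0 <= b ->
  (forall d, 0 <= f d <= 1) -> (forall d, 0 <= g d <= 1) ->
  wsum A (fun d => a * f d + b * g d) = a * wsum A f + b * wsum A g.
Proof.
move=> a_ge0 b_ge0 f01 g01.
have [f_ge0 g_ge0] : (forall d, 0 <= f d) /\ (forall d, 0 <= g d).
  by split=> d; [case/andP: (f01 d) | case/andP: (g01 d)].
rewrite -[RHS]/(fine (a * wsum A f + b * wsum A g)%:E) EFinD !EFinM -!wsumE //.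
rewrite -!esumZl //; try by move=> d _; apply: pi_mul_ge0.
rewrite -esumD; try by move=> d _; rewrite -EFinM lee_fin !mulr_ge0 ?pi_ge0.
by congr fine; apply: eq_esum => d _; rewrite -!EFinM -EFinD; congr EFin; ring.
Qed.

Section Flow.
Variable e : state n.

Let F i d := hit R d i e.

Lemma F_in01 i d : 0 <= F i d <= 1.
Proof. by rewrite hit_ge0 hit_le1. Qed.

Lemma wsum_idle i : wsum (~` active i) (F i) = wsum (~` active i) (F i.+1).
Proof. by apply: eq_wsum => d /negP/negbTE idle_d; rewrite /F hitE idle_d. Qed.

Lemma wsum_active i : (0 < i <= n)%N ->
  wsum (active i) (F i) =
  i.-1%:R / i%:R * wsum (active i) (F i \o shift i) + pi e * q i / i%:R.
Proof.
move=> i_in; have i_le : (i <= n)%N by case/andP: i_in.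
rewrite (eq_wsum (g := fun d => i.-1%:R / i%:R * F i (shift i d) +
                               1 / i%:R * (d == addE e i)%:R)); last first.
  by move=> d act_d; rewrite /F hitE (ifT _ _ act_d) active_subE_eq.
rewrite wsumDZ ?divr_ge0 // => [|d|d]; last 2 first.
- exact: F_in01.
- by case: (_ == _); rewrite lexx ler01.
rewrite wsum_pt ?pi_addE //; last exact: active_addE.
by congr (_ + _); rewrite mul1r mulrC.
Qed.

Lemma flow_balance i : (0 < i <= n)%N ->
  s i * wsum (active i) (F i) = s i.-1 * wsum (active i.-1) (F i) + pi e / n%:R.
Proof.
move=> i_in; have i_le : (i <= n)%N by case/andP: i_in.
have i_neq0 : i%:R != 0 :> R by rewrite pnatr_eq0 -lt0n; case/andP: i_in.
have s_neq0 : s i != 0 by rewrite lt0r_neq0 // sigma_le_gt0.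
rewrite wsum_active // mulrDr; congr (_ + _).
  case: (ltnP 1 i) => [i_gt1|i_le1]; last first.
    have -> : i = 1%N by lia.
    by rewrite sigma_le0 !mul0r mulr0.
  have i_in' : (1 < i <= n)%N by rewrite i_gt1.
  have mulrA3 (a b c x : R) : a * (b / c * x) = a * b / c * x by rewrite !mulrA.
  rewrite (wsum_shift i_in' (F_in01 i)) !mulrA3 sigma_le_q; last by lia.
  by congr (_ * _); rewrite /q; field; rewrite i_neq0 natrn_neq0 s_neq0.
rewrite (_ : s i * (pi e * q i / i%:R) = pi e * (s i * q i) / i%:R); last by ring.
by rewrite sigma_le_q //; field; rewrite i_neq0 natrn_neq0.
Qed.

Let passing k := s k * wsum (~` active k) (F k.+1).

Lemma flow_step (j : 'I_n) :
  sigma j * wsum setT (F j.+1) = passing j.+1 - passing j + pi e / n%:R.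
Proof.
have sigmaE : sigma j = s j.+1 - s j by rewrite sigma_leS addrC addKr.
rewrite sigmaE mulrBl {1}(wsum_split (active j.+1) (F_in01 j.+1)) wsum_idle.
rewrite (wsum_split (active j) (F_in01 j.+1)) !mulrDr flow_balance //=.
rewrite /passing; ring.
Qed.

Lemma passing0 : passing 0 = 0.
Proof. by rewrite /passing sigma_le0 mul0r. Qed.

Lemma passing_n : passing n = 0.
Proof.
rewrite /passing (_ : ~` active n = set0) ?wsum_set0 ?mulr0 //.
by rewrite -subset0 => d /=; rewrite /active /= leqnn.
Qed.

Lemma flow_total : \sum_(j < n) sigma j * wsum setT (F j.+1) = pi e.
Proof.
under eq_bigr do rewrite flow_step.
rewrite big_split /= -(big_mkord xpredT (fun j => passing j.+1 - passing j)).
rewrite telescope_sumr // passing0 passing_n subrr add0r.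
by rewrite sumr_const card_ord -[_ *+ n]mulr_natr divfK ?natrn_neq0.
Qed.

Lemma esum_pi_trans_prob :
  \esum_(ds in [set: state n]) (pi ds * trans_prob sigma ds e)%:E = (pi e)%:E.
Proof.
rewrite -flow_total -sumEFin.
transitivity (\esum_(ds in [set: state n])
                \sum_(j < n) ((sigma j)%:E * (pi ds * F j.+1 ds)%:E))%E.
  apply: eq_esum => ds _; rewrite trans_probE mulr_sumr -sumEFin.
  by apply: eq_bigr => j _; rewrite -EFinM /F; congr EFin; ring.
rewrite esum_sum; last by move=> ds j _ _; rewrite mule_ge0 ?pi_mul_ge0 ?lee_fin ?hit_ge0.
apply: eq_bigr => j _; rewrite esumZl ?wsumE ?EFinM // => [d|d _].
- exact: F_in01.
- by rewrite pi_mul_ge0 ?hit_ge0.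
Qed.

End Flow.

End Stationarity.

Theorem theorem5 (R : realType) (n : nat) (sigma : 'I_n -> R)
  (sigma_ge0 : forall j, 0 <= sigma j)
  (sigma_sum1 : \sum_(j < n) sigma j = 1)
  (hyp : forall i : nat, (0 < i < n)%N -> i%:R / n%:R < sigma_le sigma i) :
  is_stationary sigma (pi_dist sigma).
Proof.
split; first split.
- exact: pi_ge0 sigma_sum1 hyp.
- exact: pi_sum sigma_sum1 hyp.
- exact: esum_pi_trans_prob sigma_ge0 sigma_sum1 hyp.
Qed.
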